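(* Let $A$ be a pre-Lie commutative algebra, with operations $\circ$ and $\cdot$. Then $A$, equipped with the product $\circ$ and the bracket $[a_1,a_2]=a_1\cdot a_2-a_2\cdot a_1$, is an $F$-manifold algebra: $\circ$ is commutative and associative, $[-,-]$ is skew-symmetric and satisfies the Jacobi identity, and the Hertling--Manin relation $P_{a_1\circ a_2}(a_3,a_4)=a_1\circ P_{a_2}(a_3,a_4)+a_2\circ P_{a_1}(a_3,a_4)$ holds for all $a_1,a_2,a_3,a_4\in A$, where $P_{a_1}(a_2,a_3)=[a_1,a_2\circ a_3]-[a_1,a_2]\circ a_3-a_2\circ[a_1,a_3]$.
   Context: Work over a field of characteristic zero (with the Koszul sign rule if the algebra is graded; the identities are written here for even elements). A pre-Lie commutative algebra is a vector space $A$ with a commutative binary operation $\circ$ and a binary operation $\cdot$ (no symmetry) satisfying $(a_1\circ a_2)\circ a_3=a_1\circ(a_2\circ a_3)$, $(a_1\cdot a_2)\cdot a_3 - a_1\cdot (a_2\cdot a_3) = (a_1\cdot a_3)\cdot a_2- a_1\cdot (a_3\cdot a_2)$, $(a_1\circ a_2)\cdot a_3=(a_1\cdot a_3)\circ a_2 + a_1\circ (a_2\cdot a_3)$, for all $a_1,a_2,a_3\in A$. *)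

From mathcomp Require Import all_boot all_algebra.
Set Implicit Arguments. Unset Strict Implicit. Unset Printing Implicit Defensive.
Import GRing.Theory.
Local Open Scope ring_scope.

Definition bilinear_op (K : fieldType) (A : lmodType K) (op : A -> A -> A) : Prop :=
  (forall (k : K) (x y z : A), op (k *: x + y) z = k *: op x z + op y z) /\
  (forall (k : K) (x y z : A), op x (k *: y + z) = k *: op x y + op x z).

Definition pre_Lie_commutative (K : fieldType) (A : lmodType K)
  (circ dot : A -> A -> A) : Prop :=
  [/\ bilinear_op circ /\ bilinear_op dot,
      (forall a1 a2 : A, circ a1 a2 = circ a2 a1),
      (forall a1 a2 a3 : A, circ (circ a1 a2) a3 = circ a1 (circ a2 a3)),
      (forall a1 a2 a3 : A,
          dot (dot a1 a2) a3 - dot a1 (dot a2 a3)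
        = dot (dot a1 a3) a2 - dot a1 (dot a3 a2)) &
      (forall a1 a2 a3 : A,
          dot (circ a1 a2) a3 = circ (dot a1 a3) a2 + circ a1 (dot a2 a3))].

Definition commbr (K : fieldType) (A : lmodType K) (dot : A -> A -> A) (a1 a2 : A) : A :=
  dot a1 a2 - dot a2 a1.

Definition HM_P (K : fieldType) (A : lmodType K) (circ br : A -> A -> A) (a1 a2 a3 : A) : A :=
  br a1 (circ a2 a3) - circ (br a1 a2) a3 - circ a2 (br a1 a3).

Definition F_manifold_algebra (K : fieldType) (A : lmodType K) (circ br : A -> A -> A) : Prop :=
  [/\ (forall a1 a2 : A, circ a1 a2 = circ a2 a1),
      (forall a1 a2 a3 : A, circ (circ a1 a2) a3 = circ a1 (circ a2 a3)),
      (forall a1 a2 : A, br a1 a2 = - br a2 a1),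
      (forall a1 a2 a3 : A, br a1 (br a2 a3) + br a2 (br a3 a1) + br a3 (br a1 a2) = 0) &
      (forall a1 a2 a3 a4 : A,
          HM_P circ br (circ a1 a2) a3 a4
        = circ a1 (HM_P circ br a2 a3 a4) + circ a2 (HM_P circ br a1 a3 a4))].

(* Write L_a, R_a for left and right [dot]-multiplication by a, and let the
   derivation defect of f : A -> A be (b, c) |-> f (b o c) - f b o c - b o f c,
   so that P_a is the defect of L_a - R_a.  The compatibility axiom says that
   R_a is a derivation of o, and that L_(a1 o a2) = a2 o L_a1 + a1 o L_a2.
   The defect is additive in f and, o being commutative and associative,
   commutes with o-multiplication, so P_a is the defect of L_a and the
   Hertling-Manin relation follows.  For Jacobi, the pre-Lie identity turns
   [a,[b,c]] into ((ab)c - (bc)a) - ((ac)b - (cb)a), and the cyclic sum of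
   each of the two differences telescopes. *)

From mathcomp Require Import all_boot all_algebra.
Local Open Scope ring_scope.
Import GRing.Theory.

Section ZmodRearrangements.
Variable V : zmodType.
Implicit Types p q r s : V.

Lemma subrACA p q r s : (p - q) + (r - s) = (p + r) - (q + s).
Proof. by rewrite addrACA opprD. Qed.

Lemma subrBAC p q r s : (p - q) - (r - s) = (p - r) - (q - s).
Proof. by rewrite !opprB !subrACA [q + _]addrC. Qed.

Lemma subr_cycle p q r : (p - q) + (q - r) + (r - p) = 0.
Proof. by rewrite !subrKA subrr. Qed.

End ZmodRearrangements.

Section Bilinear.
Context {K : fieldType} {A : lmodType K} {op : A -> A -> A}.
Hypothesis op_bilinear : bilinear_op op.

Lemma opDl x y z : op (x + y) z = op x z + op y z.
Proof. by have := (proj1 op_bilinear) 1 x y z; rewrite !scale1r. Qed.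

Lemma opDr x y z : op x (y + z) = op x y + op x z.
Proof. by have := (proj2 op_bilinear) 1 x y z; rewrite !scale1r. Qed.

Lemma opBl x y z : op (x - y) z = op x z - op y z.
Proof.
by have := (proj1 op_bilinear) (-1) y x z; rewrite !scaleN1r ![- _ + _]addrC.
Qed.

Lemma opBr x y z : op x (y - z) = op x y - op x z.
Proof.
by have := (proj2 op_bilinear) (-1) x z y; rewrite !scaleN1r ![- _ + _]addrC.
Qed.

End Bilinear.

Definition derivation_defect {K : fieldType} {A : lmodType K}
  (circ : A -> A -> A) (f : A -> A) (b c : A) : A :=
  f (circ b c) - circ (f b) c - circ b (f c).

Section DerivationDefect.
Context {K : fieldType} {A : lmodType K} {circ : A -> A -> A}.
Hypothesis circ_bilinear : bilinear_op circ.

Lemma derivation_defect0 f b c :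
  (forall x y, f (circ x y) = circ (f x) y + circ x (f y)) ->
  derivation_defect circ f b c = 0.
Proof. by move=> f_der; rewrite /derivation_defect f_der -addrA -opprD subrr. Qed.

Lemma derivation_defectD f g h b c :
  (forall x, h x = f x + g x) ->
  derivation_defect circ h b c
  = derivation_defect circ f b c + derivation_defect circ g b c.
Proof.
move=> hE; rewrite /derivation_defect !hE (opDl circ_bilinear) (opDr circ_bilinear).
by rewrite !opprD (addrACA (f _)) [LHS]addrACA.
Qed.

Lemma derivation_defectB f g h b c :
  (forall x, h x = f x - g x) ->
  derivation_defect circ h b c
  = derivation_defect circ f b c - derivation_defect circ g b c.
Proof.
move=> hE; apply/esym/eqP; rewrite subr_eq; apply/eqP.
by apply: derivation_defectD => x; rewrite hE subrK.
Qed.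

Hypotheses (circC : forall a b, circ a b = circ b a)
  (circA : forall a b c, circ (circ a b) c = circ a (circ b c)).

Lemma derivation_defect_circl u f b c :
  derivation_defect circ (fun x => circ u (f x)) b c
  = circ u (derivation_defect circ f b c).
Proof.
rewrite /derivation_defect !(opBr circ_bilinear) circA.
by rewrite -[circ b (circ u _)]circA [circ b u]circC circA.
Qed.

End DerivationDefect.

Section RightSymmetric.
Context {K : fieldType} {A : lmodType K} {dot : A -> A -> A}.
Hypotheses (dot_bilinear : bilinear_op dot)
  (dot_right_symmetric : forall a b c,
    dot (dot a b) c - dot a (dot b c) = dot (dot a c) b - dot a (dot c b)).

Lemma dot_commbr a b c : dot a (commbr dot b c) = dot (dot a b) c - dot (dot a c) b.
Proof.
rewrite /commbr (opBr dot_bilinear) -[dot (dot a c) b](subrK (dot a (dot c b))).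
by rewrite -dot_right_symmetric opprD addrA subKr.
Qed.

Lemma commbr_commbr a b c :
  commbr dot a (commbr dot b c)
  = (dot (dot a b) c - dot (dot b c) a) - (dot (dot a c) b - dot (dot c b) a).
Proof. by rewrite {1}/commbr dot_commbr /commbr (opBl dot_bilinear) subrBAC. Qed.

Lemma commbr_jacobi a b c :
  commbr dot a (commbr dot b c) + commbr dot b (commbr dot c a)
  + commbr dot c (commbr dot a b) = 0.
Proof.
rewrite !commbr_commbr 2!subrACA [X in _ - X]addrAC.
by rewrite !subr_cycle subrr.
Qed.

End RightSymmetric.

Section HertlingManin.
Context {K : fieldType} {A : lmodType K} {circ dot : A -> A -> A}.
Hypotheses (circ_bilinear : bilinear_op circ)
  (circC : forall a b, circ a b = circ b a)
  (circA : forall a b c, circ (circ a b) c = circ a (circ b c))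
  (dot_circ : forall a b c, dot (circ a b) c = circ (dot a c) b + circ a (dot b c)).

Lemma HM_P_commbr a b c :
  HM_P circ (commbr dot) a b c = derivation_defect circ (dot a) b c.
Proof.
have dotr_derivation : derivation_defect circ (dot^~ a) b c = 0.
  exact: derivation_defect0 (fun x y => dot_circ x y a).
rewrite -[RHS]subr0 -dotr_derivation.
by apply: (derivation_defectB circ_bilinear).
Qed.

Lemma HM_P_circ a1 a2 b c :
  HM_P circ (commbr dot) (circ a1 a2) b c
  = circ a1 (HM_P circ (commbr dot) a2 b c) + circ a2 (HM_P circ (commbr dot) a1 b c).
Proof.
rewrite !HM_P_commbr addrC -!(derivation_defect_circl circ_bilinear circC circA).
by apply: (derivation_defectD circ_bilinear) => x; rewrite dot_circ circC.
Qed.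

End HertlingManin.

Theorem proposition12 (K : fieldType) (hK : [pchar K] =i pred0) (A : lmodType K)
  (circ dot : A -> A -> A) :
  pre_Lie_commutative circ dot ->
  F_manifold_algebra circ (commbr dot).
Proof.
case=> [[circ_bilinear dot_bilinear] circC circA dot_right_symmetric dot_circ].
split=> // [a1 a2 | a1 a2 a3 | a1 a2 a3 a4].
- by rewrite /commbr opprB.
- exact: commbr_jacobi.
- exact: HM_P_circ.
Qed.
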